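(* For every $f=\sum_{n\ge0}f_n\mathtt{x}^n\in\mathbb{K}[[\mathtt{x}]]$ and every $\sigma_{+}\in\mathfrak{M}^{+}$, the series $\sum_{n\ge0}f_n\sigma_{+}^{\circ n}$ converges in $\mathfrak{M}$.
   Context: $\mathbb{K}$ is a field of characteristic zero (discrete topology); $\mathbb{K}[[\mathtt{x}]]$ has the $(\mathtt{x})$-adic topology, given by the order valuation $\nu$ ($\nu(0)=+\infty$). $\mathfrak{M}:=\mathtt{x}\mathbb{K}[[\mathtt{x}]]$ (subspace topology) and $\mathfrak{M}^{+}:=\{\sigma\in\mathfrak{M}:\nu(\sigma)>1\}=\mathtt{x}^2\mathbb{K}[[\mathtt{x}]]$. For $g=\sum g_n\mathtt{x}^n$ and $\sigma\in\mathfrak{M}$, $g\circ\sigma:=\sum g_n\sigma^n$; $\sigma^{\circ0}:=\mathtt{x}$, $\sigma^{\circ n}:=\sigma\circ\cdots\circ\sigma$ ($n$ factors). *)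

From mathcomp Require Import all_boot all_order all_algebra.
Set Implicit Arguments. Unset Strict Implicit. Unset Printing Implicit Defensive.
Import GRing.Theory.
Local Open Scope ring_scope.

Section FPS.
Variable K : fieldType.

Definition fps := nat -> K.

Definition fps_one : fps := fun k => (k == 0)%:R.
Definition fps_x : fps := fun k => (k == 1)%:R.

Definition fps_mul (f g : fps) : fps :=
  fun k => \sum_(i < k.+1) f i * g (k - i)%N.

Definition fps_pow (s : fps) (n : nat) : fps := iter n (fps_mul s) fps_one.

Definition fps_val_ge (s : fps) (m : nat) : Prop := forall k, (k < m)%N -> s k = 0.

(* M = x K[[x]] and M^+ = x^2 K[[x]] *)
Definition in_M (s : fps) : Prop := fps_val_ge s 1.
Definition in_Mplus (s : fps) : Prop := fps_val_ge s 2.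

(* g o s = sum_n g_n s^n for s in M; since nu(s^n) >= n, the coefficient of
   x^k only receives contributions from n <= k (the x-adic sum is
   coefficientwise finite). *)
Definition fps_comp (g s : fps) : fps :=
  fun k => \sum_(n < k.+1) g n * fps_pow s n k.

Definition fps_iter (s : fps) (n : nat) : fps := iter n (fps_comp s) fps_x.

(* convergence in the (x)-adic topology: for every k, eventually the
   terms agree with the limit on the coefficients of x^0 .. x^k *)
Definition fps_cvg (u : nat -> fps) (L : fps) : Prop :=
  forall k : nat, exists N0 : nat, forall N : nat, (N0 <= N)%N ->
    forall j : nat, (j <= k)%N -> u N j = L j.

Definition iter_psum (f s : fps) (N : nat) : fps :=
  fun k => \sum_(n < N) f n * fps_iter s n k.

End FPS.

From mathcomp Require Import all_boot all_order all_algebra.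
From mathcomp Require Import zify.
Local Open Scope ring_scope.
Import GRing.Theory.

(* Valuations add under products, so nu(t^n) >= n nu(t) and hence
   nu(s o t) >= nu(s) nu(t).  With nu(s) >= 2 this gives
   nu(s^{on}) >= n + 1 by induction, so the terms f_n s^{on} with n > k
   do not touch the coefficient of x^k: the partial sums are eventually
   constant coefficientwise.  The limit lies in M because s^{o0} = x. *)

Section Valuation.
Variable K : fieldType.
Implicit Types (s t u : fps K) (a b m n : nat).

Lemma fps_val_ge_le s a b : (b <= a)%N -> fps_val_ge s a -> fps_val_ge s b.
Proof. by move=> ba hs k kb; apply: hs; apply: leq_trans ba. Qed.

Lemma fps_val_ge_mul s t a b :
  fps_val_ge s a -> fps_val_ge t b -> fps_val_ge (fps_mul s t) (a + b).
Proof.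
move=> hs ht k hk; rewrite /fps_mul big1 // => i _.
have [ia|ai] := ltnP i a; first by rewrite hs // mul0r.
have := ltn_ord i; rewrite ltnS => ik.
by rewrite ht ?mulr0 //; lia.
Qed.

Lemma fps_val_ge_pow t m n : fps_val_ge t m -> fps_val_ge (fps_pow t n) (n * m).
Proof.
move=> ht; elim: n => [|n IH]; first by [].
by rewrite /fps_pow iterS mulSn; apply: fps_val_ge_mul.
Qed.

Lemma fps_val_ge_comp s t a m :
  fps_val_ge s a -> fps_val_ge t m -> fps_val_ge (fps_comp s t) (a * m).
Proof.
move=> hs ht k hk; rewrite /fps_comp big1 // => n _.
have [na|an] := ltnP n a; first by rewrite hs // mul0r.
rewrite (@fps_val_ge_pow t m n ht) ?mulr0 //.
by apply: leq_trans hk _; rewrite leq_mul2r an orbT.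
Qed.

Lemma fps_val_ge_iter s n : in_Mplus s -> fps_val_ge (fps_iter s n) n.+1.
Proof.
move=> hs; elim: n => [|n IH].
  by move=> k; rewrite ltnS leqn0 => /eqP ->.
rewrite /fps_iter iterS; apply: (@fps_val_ge_le _ (2 * n.+1)).
  by rewrite mul2n -addnn addSn ltnS leq_addl.
exact: fps_val_ge_comp.
Qed.

End Valuation.

Lemma fps_cvg_sum {K : fieldType} (u : nat -> fps K) :
  (forall n, fps_val_ge (u n) n) ->
  fps_cvg (fun N k => \sum_(n < N) u n k) (fun k => \sum_(n < k.+1) u n k).
Proof.
move=> hu k; exists k.+1 => N hN j hj.
have jN : (j.+1 <= N)%N by apply: leq_ltn_trans hN.
rewrite -(subnKC jN) big_split_ord /= [X in _ + X]big1 ?addr0 // => i _.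
by apply: hu; rewrite ltnS leq_addr.
Qed.

Theorem mainTheorem8 (K : fieldType) (charK0 : [pchar K] =i pred0)
  (f s : fps K) (hs : in_Mplus s) :
  exists L : fps K, in_M L /\ fps_cvg (iter_psum f s) L.
Proof.
have val_term n : fps_val_ge (fun k => f n * fps_iter s n k) n.
  move=> k kn; rewrite (@fps_val_ge_iter K s n hs) ?mulr0 //.
  exact: ltn_trans (ltnSn n).
exists (fun k => \sum_(n < k.+1) f n * fps_iter s n k); split.
  move=> k; rewrite ltnS leqn0 => /eqP ->.
  by rewrite big_ord1 (@fps_val_ge_iter K s 0 hs) ?mulr0.
exact: fps_cvg_sum val_term.
Qed.
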